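(* Let $(\mathcal{F},\mathcal{F}_d,R)$ be a complementary justification frame. Then for every $x\in\mathcal{F}_d$ and all rules $x\gets A$ and $\sim x\gets B$ in $R$, we have $A\cap\sim B\neq\emptyset$.
   Context: A fact space is a set $\mathcal{F}$ containing $\mathcal{L}=\{\mathbf{t},\mathbf{f},\mathbf{u}\}$, equipped with an involution $\sim$ with $\sim\mathbf{t}=\mathbf{f}$, $\sim\mathbf{u}=\mathbf{u}$, $\sim x\ne x$ for $x\ne\mathbf{u}$; $\sim B=\{\sim b:b\in B\}$. A justification frame is $(\mathcal{F},\mathcal{F}_d,R)$ with defined facts $\mathcal{F}_d\subseteq\mathcal{F}$, $\sim\mathcal{F}_d=\mathcal{F}_d$, $\mathcal{L}\cap\mathcal{F}_d=\emptyset$, and rules $R\subseteq\mathcal{F}_d\times2^{\mathcal{F}}$ written $x\gets A$, such that each $x\in\mathcal{F}_d$ has a rule with nonempty body and no rule with empty body. Let $R(x)$ be the set of bodies of rules with head $x$. A selection function for $x$ is a map $S:R(x)\to\mathcal{F}$ with $S(A)\in A$ for all $A\in R(x)$; $\mathrm{im}(S)$ is its image. The frame is complementary if for every $x\in\mathcal{F}_d$: (1) for every selection function $S$ for $x$ there is $A\in R(\sim x)$ with $A\subseteq\sim\mathrm{im}(S)$; (2) for every $A\in R(x)$ there is a selection function $S$ for $\sim x$ with $\sim\mathrm{im}(S)\subseteq A$. *)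

Record FactSpace : Type := {
  fs_carrier :> Type;
  fs_neg : fs_carrier -> fs_carrier;
  fs_t : fs_carrier;
  fs_f : fs_carrier;
  fs_u : fs_carrier;
  fs_tu : fs_t <> fs_u;
  fs_fu : fs_f <> fs_u;
  fs_tf : fs_t <> fs_f;
  fs_invol : forall x, fs_neg (fs_neg x) = x;
  fs_neg_t : fs_neg fs_t = fs_f;
  fs_neg_u : fs_neg fs_u = fs_u;
  fs_neg_neq : forall x, x <> fs_u -> fs_neg x <> x
}.

Definition negset {F : FactSpace} (B : F -> Prop) : F -> Prop :=
  fun y => exists b, B b /\ y = fs_neg F b.

Definition inL {F : FactSpace} (x : F) : Prop :=
  x = fs_t F \/ x = fs_f F \/ x = fs_u F.

(* Justification frame (F, Fd, R); [R x A] means the rule x <- A is in R. *)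
Definition justification_frame (F : FactSpace) (Fd : F -> Prop)
    (R : F -> (F -> Prop) -> Prop) : Prop :=
  (forall x, Fd x <-> negset Fd x) /\
  (forall x, inL x -> ~ Fd x) /\
  (forall x A, R x A -> Fd x) /\
  (forall x, Fd x -> exists A, R x A /\ exists y, A y) /\
  (forall x A, Fd x -> R x A -> exists y, A y).

Definition selection {F : FactSpace} (R : F -> (F -> Prop) -> Prop) (x : F)
    (S : forall A : F -> Prop, R x A -> F) : Prop :=
  forall A (h : R x A), A (S A h).

Definition sel_image {F : FactSpace} {R : F -> (F -> Prop) -> Prop} {x : F}
    (S : forall A : F -> Prop, R x A -> F) : F -> Prop :=
  fun y => exists A (h : R x A), S A h = y.

Definition complementary (F : FactSpace) (Fd : F -> Prop)
    (R : F -> (F -> Prop) -> Prop) : Prop :=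
  forall x, Fd x ->
    (forall S : (forall A : F -> Prop, R x A -> F), selection R x S ->
       exists A, R (fs_neg F x) A /\ (forall y, A y -> negset (sel_image S) y)) /\
    (forall A, R x A ->
       exists S : (forall B : F -> Prop, R (fs_neg F x) B -> F),
         selection R (fs_neg F x) S /\
         (forall y, negset (sel_image S) y -> A y)).


Lemma negset_neg (F : FactSpace) (B : F -> Prop) (b : F) :
  B b -> negset B (fs_neg F b).
Proof. intros Hb. exists b. split; [exact Hb | reflexivity]. Qed.

Lemma sel_image_app (F : FactSpace) (R : F -> (F -> Prop) -> Prop) (x : F)
    (S : forall A : F -> Prop, R x A -> F) (A : F -> Prop) (h : R x A) :
  sel_image S (S A h).
Proof. exists A, h. reflexivity. Qed.

Theorem mainTheorem6 (F : FactSpace) (Fd : F -> Prop)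
    (R : F -> (F -> Prop) -> Prop) :
  justification_frame F Fd R ->
  complementary F Fd R ->
  forall x, Fd x ->
  forall A B, R x A -> R (fs_neg F x) B ->
  exists y, A y /\ negset B y.
Proof.
  (* Only clause (2) of complementarity is used: a selection S for ~x with
     ~im(S) ⊆ A puts ~S(B) in both A and ~B. *)
  intros _ Hcompl x Hx A B HA HB.
  destruct (proj2 (Hcompl x Hx) A HA) as [S [HS HimS]].
  exists (fs_neg F (S B HB)). split.
  - apply HimS, negset_neg, sel_image_app.
  - apply negset_neg, HS.
Qed.
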